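(* Let $\mathcal{L}$ be a polar space and $f:\mathcal{L}\to\mathbf{R}\cup\{\infty\}$. The following are equivalent: (1) $f$ is submodular on $\mathcal{L}$; (2) $f(p)+f(q)\ge f(p\wedge q)+f(p\sqcup q)$ for all $p,q\in\mathcal{L}$; (3) $f$ is bisubmodular on each polar frame $\mathcal{F}\cong\mathcal{S}_2^n$, i.e., $f\circ\psi$ is bisubmodular on $\{-1,0,1\}^n$ for an isomorphism $\psi:\{-1,0,1\}^n\to\mathcal{F}$.
   Context: $\mathcal{S}_2=\{-1,0,1\}$ is the poset with minimum $0$ and incomparable $-1,1$; $\mathcal{S}_2^n$ has the componentwise order. A polar space of rank $n$ is a meet-semilattice $\mathcal{L}$ that is a union of subsemilattices (polar frames) such that (P0) each polar frame is isomorphic to $\mathcal{S}_2^n$; (P1) any two chains lie in a common polar frame; (P2) if polar frames $\mathcal{F},\mathcal{F}'$ both contain chains $C,D$, there is an isomorphism $\mathcal{F}\to\mathcal{F}'$ fixing $C,D$ pointwise. A polar space is a modular semilattice (meet-semilattice of finite rank with rank $r$, principal ideals modular lattices, $x\vee y\vee z$ exists whenever the pairwise joins exist). Left/right join: $p\vee_L q:=p\vee u$ for the unique maximal $u\in[p\wedge q,q]$ such that $p\vee u$ exists; $p\vee_R q:=q\vee v$ for the unique maximal $v\in[p\wedge q,p]$ such that $q\vee v$ exists. Pseudo join: $p\sqcup q:=(p\vee_L q)\wedge(p\vee_R q)$. Submodularity: for $p,q$ let $I(p,q)$ be the elements on shortest $p$–$q$ paths of the covering graph; $r(u;p,q)=(r(u\wedge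 p)-r(p\wedge q),r(u\wedge q)-r(p\wedge q))$; $\mathcal{E}(p,q)$ the $u\in I(p,q)$ with $r(u;p,q)$ a componentwise-maximal extreme point of the convex hull $\mathrm{Conv}I(p,q)$; $C(u;p,q)=\{w\in\mathbf{R}^2_{\ge0}:\langle w,r(u;p,q)\rangle=\max_{z\in\mathrm{Conv}I(p,q)}\langle w,z\rangle\}=\{(x,y)\ge0:y\cos\alpha\le x\sin\alpha,\ y\cos\beta\ge x\sin\beta\}$ ($0\le\beta\le\alpha\le\pi/2$), $[C]=\frac{\sin\alpha}{\sin\alpha+\cos\alpha}-\frac{\sin\beta}{\sin\beta+\cos\beta}$. $f$ is submodular if $f(p)+f(q)\ge f(p\wedge q)+\sum_{u\in\mathcal{E}(p,q)}[C(u;p,q)]f(u)$ for all $p,q$ (zero-coefficient terms omitted; $a+\infty=\infty$). Bisubmodular: $h:\{-1,0,1\}^n\to\mathbf{R}\cup\{\infty\}$ is bisubmodular if $h(x)+h(y)\ge h(x\sqcap y)+h(x\sqcup y)$, where componentwise $x_i\sqcap y_i=x_i$ if $x_i=y_i$ and $0$ otherwise, and $x_i\sqcup y_i$ is the larger of $x_i,y_i$ if they are comparable and $0$ if $\{x_i,y_i\}=\{-1,1\}$. *)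

From Stdlib Require Import Reals List ClassicalEpsilon.
From mathcomp Require Import ssreflect ssrfun ssrbool eqtype ssrnat fintype.

Set Implicit Arguments.
Unset Strict Implicit.

Local Open Scope R_scope.

(* ---------- R ∪ {∞}: None = +∞ ---------- *)
Definition ER := option R.

Definition addE (a b : ER) : ER :=
  match a, b with Some x, Some y => Some (x + y) | _, _ => None end.

Definition leE (a b : ER) : Prop :=
  match b with
  | None => True
  | Some y => match a with None => False | Some x => x <= y end
  end.

Definition scaleE (c : R) (a : ER) : ER :=
  match a with Some x => Some (c * x) | None => None end.

Fixpoint sumE (l : list ER) : ER :=
  match l with nil => Some 0 | a :: l' => addE a (sumE l') end.

Inductive S2 : Type := Sm | S0 | Sp .

Definition S2_le (a b : S2) : Prop := a = S0 \/ a = b.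

Definition S2n (n : nat) := 'I_n -> S2.

Definition S2n_le (n : nat) (x y : S2n n) : Prop := forall i, S2_le (x i) (y i).

Definition s2meet (a b : S2) : S2 :=
  match a, b with
  | Sm, Sm => Sm | Sp, Sp => Sp | S0, S0 => S0 | _, _ => S0 end.

Definition s2join (a b : S2) : S2 :=
  match a, b with
  | S0, b => b | a, S0 => a | Sm, Sm => Sm | Sp, Sp => Sp | _, _ => S0 end.

Definition S2n_meet (n : nat) (x y : S2n n) : S2n n := fun i => s2meet (x i) (y i).
Definition S2n_join (n : nat) (x y : S2n n) : S2n n := fun i => s2join (x i) (y i).

Definition bisubmodular (n : nat) (h : S2n n -> ER) : Prop :=
  forall x y : S2n n,
    leE (addE (h (S2n_meet x y)) (h (S2n_join x y))) (addE (h x) (h y)).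

Section PolarSpace.
Variables (T : Type) (le : T -> T -> Prop) (meet : T -> T -> T).

Definition lt (x y : T) : Prop := le x y /\ x <> y.

Definition is_meet_semilattice : Prop :=
  (forall x, le x x) /\
  (forall x y, le x y -> le y x -> x = y) /\
  (forall x y z, le x y -> le y z -> le x z) /\
  (forall x y, le (meet x y) x /\ le (meet x y) y /\
               forall z, le z x -> le z y -> le z (meet x y)).

Definition is_chain (C : T -> Prop) : Prop :=
  forall x y, C x -> C y -> le x y \/ le y x.

Definition frame_iso (n : nat) (F : T -> Prop) (psi : S2n n -> T) : Prop :=
  (forall x, F (psi x)) /\
  (forall y, F y -> exists x, psi x = y) /\
  (forall x y, le (psi x) (psi y) <-> S2n_le x y).

Definition sub_iso (F F' : T -> Prop) (phi : T -> T) : Prop :=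
  (forall x, F x -> F' (phi x)) /\
  (forall y, F' y -> exists x, F x /\ phi x = y) /\
  (forall x y, F x -> F y -> (le (phi x) (phi y) <-> le x y)).

Definition is_polar_space (n : nat) (Frame : (T -> Prop) -> Prop) : Prop :=
  is_meet_semilattice /\
  (forall x, exists F, Frame F /\ F x) /\
  (forall F, Frame F -> forall x y, F x -> F y -> F (meet x y)) /\
  (forall F, Frame F -> exists psi, @frame_iso n F psi) /\
  (* (P1) *)
  (forall C D, is_chain C -> is_chain D ->
     exists F, Frame F /\ (forall x, C x -> F x) /\ (forall x, D x -> F x)) /\
  (* (P2) *)
  (forall F F' C D, Frame F -> Frame F' -> is_chain C -> is_chain D ->
     (forall x, C x -> F x /\ F' x) -> (forall x, D x -> F x /\ F' x) ->
     exists phi, sub_iso F F' phi /\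
       (forall x, C x -> phi x = x) /\ (forall x, D x -> phi x = x)).

Definition is_join (x y z : T) : Prop :=
  le x z /\ le y z /\ forall w, le x w -> le y w -> le z w.

Definition has_join (x y : T) : Prop := exists z, is_join x y z.

Definition joinL_spec (p q z : T) : Prop :=
  exists u, le (meet p q) u /\ le u q /\ has_join p u /\
    (forall v, le (meet p q) v -> le v q -> has_join p v -> le u v -> u = v) /\
    is_join p u z.

Definition joinL (p q : T) : T := epsilon (inhabits p) (joinL_spec p q).

Definition joinR_spec (p q z : T) : Prop :=
  exists v, le (meet p q) v /\ le v p /\ has_join q v /\
    (forall w, le (meet p q) w -> le w p -> has_join q w -> le v w -> v = w) /\
    is_join q v z.

Definition joinR (p q : T) : T := epsilon (inhabits p) (joinR_spec p q).

Definition pjoin (p q : T) : T := meet (joinL p q) (joinR p q).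

Fixpoint desc (x : T) (l : list T) : Prop :=
  match l with nil => True | y :: l' => lt y x /\ desc y l' end.

Definition is_rank (x : T) (k : nat) : Prop :=
  (exists l, length l = k /\ desc x l) /\
  (forall l, desc x l -> (length l <= k)%nat).

Definition rk (x : T) : nat := epsilon (inhabits 0%nat) (is_rank x).

Definition covers (x y : T) : Prop :=
  lt x y /\ ~ (exists z, lt x z /\ lt z y).

Definition adj (x y : T) : Prop := covers x y \/ covers y x.

Fixpoint walk (x : T) (l : list T) (q : T) : Prop :=
  match l with nil => x = q | y :: l' => adj x y /\ walk y l' q end.

Definition shortest_walk (p : T) (l : list T) (q : T) : Prop :=
  walk p l q /\ forall l', walk p l' q -> (length l <= length l')%nat.

Definition Ipq (p q u : T) : Prop :=
  exists l, shortest_walk p l q /\ (u = p \/ In u l).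

Definition rvec (p q u : T) : R * R :=
  (INR (rk (meet u p)) - INR (rk (meet p q)),
   INR (rk (meet u q)) - INR (rk (meet p q))).

(* convex hull of the finite point set { r(u;p,q) | u in I(p,q) } *)
Fixpoint conv_sum (l : list (R * T)) (p q : T) : R * R :=
  match l with
  | nil => (0, 0)
  | (t, u) :: l' => let s := conv_sum l' p q in
                    (t * fst (rvec p q u) + fst s, t * snd (rvec p q u) + snd s)
  end.

Definition ConvI (p q : T) (z : R * R) : Prop :=
  exists l : list (R * T),
    (forall t u, In (t, u) l -> 0 <= t /\ Ipq p q u) /\
    fold_right Rplus 0 (map fst l) = 1 /\
    z = conv_sum l p q.

Definition extreme_point (K : R * R -> Prop) (z : R * R) : Prop :=
  K z /\ forall a b t, K a -> K b -> 0 < t < 1 ->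
    z = (t * fst a + (1 - t) * fst b, t * snd a + (1 - t) * snd b) -> a = z /\ b = z.

Definition cw_maximal (K : R * R -> Prop) (z : R * R) : Prop :=
  K z /\ forall z', K z' -> fst z <= fst z' -> snd z <= snd z' -> z' = z.

Definition Epq (p q u : T) : Prop :=
  Ipq p q u /\ extreme_point (ConvI p q) (rvec p q u) /\
  cw_maximal (ConvI p q) (rvec p q u).

Definition dot (w z : R * R) : R := fst w * fst z + snd w * snd z.

Definition Cone (p q u : T) (w : R * R) : Prop :=
  0 <= fst w /\ 0 <= snd w /\
  forall z, ConvI p q z -> dot w z <= dot w (rvec p q u).

End PolarSpace.

Definition angle_cone (a b : R) (w : R * R) : Prop :=
  0 <= fst w /\ 0 <= snd w /\
  snd w * cos a <= fst w * sin a /\ snd w * cos b >= fst w * sin b.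

Definition cone_coeff (C : R * R -> Prop) : R :=
  let ab := epsilon (inhabits (0, 0))
              (fun ab : R * R => 0 <= snd ab /\ snd ab <= fst ab /\ fst ab <= PI / 2 /\
                 forall w, C w <-> angle_cone (fst ab) (snd ab) w) in
  sin (fst ab) / (sin (fst ab) + cos (fst ab)) -
  sin (snd ab) / (sin (snd ab) + cos (snd ab)).

Section Submod.
Variables (T : Type) (le : T -> T -> Prop) (meet : T -> T -> T).

Definition sm_term (f : T -> ER) (p q u : T) : ER :=
  let c := cone_coeff (Cone le meet p q u) in
  if Req_EM_T c 0 then Some 0 else scaleE c (f u).

(* submodularity; the sum over E(p,q) is taken along any duplicate-free
   enumeration of E(p,q) *)
Definition submodular (f : T -> ER) : Prop :=
  forall p q (l : list T), NoDup l -> (forall u, In u l <-> Epq le meet p q u) ->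
    leE (addE (f (meet p q)) (sumE (map (sm_term f p q) l))) (addE (f p) (f q)).

Definition pjoin_submodular (f : T -> ER) : Prop :=
  forall p q, leE (addE (f (meet p q)) (f (pjoin le meet p q))) (addE (f p) (f q)).

Definition frame_bisubmodular (n : nat) (Frame : (T -> Prop) -> Prop) (f : T -> ER) : Prop :=
  forall F, Frame F -> exists psi, @frame_iso T le n F psi /\
    bisubmodular (fun x : S2n n => f (psi x)).

End Submod.

From Stdlib Require Import Reals List Permutation Lia Lra.
From Stdlib Require Import ClassicalEpsilon Classical FunctionalExtensionality.
From mathcomp Require Import ssreflect ssrfun ssrbool eqtype ssrnat fintype bigop.
From mathcomp Require Import zify.

Set Implicit Arguments.
Unset Strict Implicit.

(** Any two elements p, q lie in a common polar frame psi : S_2^n -> F, and by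
   (P1)-(P2) everything in the statement can be computed inside it.  Meets are
   coordinatewise; p \/_L q is psi of "x, with its zero coordinates filled in
   from y", p \/_R q the same with x and y exchanged, and their meet is psi of the
   bisubmodular join x |_| y.  This gives (2) <-> (3).

   Ranks count nonzero coordinates, and the covering-graph distance is
   r(p) + r(q) - 2 r(p /\ q), so I(p,q) is the set of u with
   d(p,u) + d(u,q) = d(p,q).  For these u the vector r(u;p,q) lies in the polygon
   z1 <= a, z2 <= b, z1 + z2 <= a + b - c, where a = r(p) - r(p /\ q),
   b = r(q) - r(p /\ q) and c counts the coordinates in which x and y have
   opposite signs; its vertices (a, b - c) and (a - c, b) are attained exactly
   by p \/_L q and p \/_R q.  Hence E(p,q) = {p \/_L q, p \/_R q}, each with
   coefficient 1/2 (a single point with coefficient 1 when c = 0), and (1) at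
   (p,q) reads f p + f q >= f (p /\ q) + (f (p \/_L q) + f (p \/_R q)) / 2.
   This is the sum of three instances of (2), and together with its own
   instance at (p \/_L q, p \/_R q), whose meet is p |_| q, it implies (2). *)

Lemma ltn_sum (I : finType) (F G : I -> nat) j :
  (forall i, F i <= G i) -> F j < G j -> \sum_i F i < \sum_i G i.
Proof.
move=> leFG ltFGj; rewrite (bigD1 j) // [X in _ < X](bigD1 j) //=.
by rewrite -addSn leq_add // leq_sum.
Qed.

Lemma sum_gt0 (I : finType) (F : I -> nat) j : 0 < F j -> 0 < \sum_i F i.
Proof. by move=> HFj; move: (@ltn_sum _ (fun=> 0) F j); rewrite big1_eq; apply. Qed.

Lemma sum_update (I : finType) (F G : I -> nat) j :
  (forall i, i != j -> F i = G i) -> \sum_i F i + G j = \sum_i G i + F j.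
Proof.
move=> eqFG; rewrite (bigD1 j) // [\sum_i G i](bigD1 j) //=.
rewrite (eq_bigr G) => [|i /eqFG //]; lia.
Qed.

Lemma epsilon_unique A (i : inhabited A) (P : A -> Prop) a :
  P a -> (forall z, P z -> z = a) -> epsilon i P = a.
Proof. by move=> Ha Hu; apply: Hu; apply: epsilon_spec; exists a. Qed.

Lemma desc_map A B (leA : A -> A -> Prop) (leB : B -> B -> Prop) (phi : A -> B)
    (S : A -> Prop) top l :
  (forall a b, S a -> S b -> leA a b -> leB (phi a) (phi b)) ->
  (forall a b, S a -> S b -> phi a = phi b -> a = b) ->
  S top -> (forall z, In z l -> S z) -> desc leA top l -> desc leB (phi top) (map phi l).
Proof.
move=> Hmono Hinj; elim: l top => [|y l IH] top Stop Sl //= [[Hyt Hne] Hd].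
have Sy : S y by apply: Sl; left.
split; first by split; [apply: Hmono | move/Hinj => E; apply: Hne; apply: E].
by apply: IH => // z Hz; apply: Sl; right.
Qed.

(** * Sign vectors *)

Definition s2_nonzero (a : S2) : bool := if a is S0 then false else true.

Definition s2_opposite (a b : S2) : bool :=
  match a, b with Sm, Sp | Sp, Sm => true | _, _ => false end.

Definition s2_dist (a b : S2) : nat :=
  match a, b with
  | S0, S0 | Sm, Sm | Sp, Sp => 0
  | S0, _ | _, S0 => 1
  | _, _ => 2
  end.

Section SignVectors.
Variable n : nat.
Implicit Types (x y z a b : S2n n) (i j : 'I_n).

Definition S2n_rank x := \sum_i s2_nonzero (x i).
Definition S2n_conflicts x y := \sum_i s2_opposite (x i) (y i).
Definition S2n_dist x y := \sum_i s2_dist (x i) (y i).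
Definition S2n_compatible x y := forall i, s2_opposite (x i) (y i) = false.
Definition S2n_joinL x y : S2n n := fun i => if x i is S0 then y i else x i.
(* The largest element of [x /\ y, y] that has a join with x: the u in the
   definition of p \/_L q. *)
Definition S2n_compat_part x y : S2n n :=
  fun i => if s2_opposite (x i) (y i) then S0 else y i.
Definition S2n_upd x j (c : S2) : S2n n := fun i => if i == j then c else x i.

Ltac s2_cases :=
  rewrite /S2_le /S2n_meet /S2n_join /S2n_joinL /S2n_compat_part /s2meet /s2join;
  repeat match goal with
  | |- context [?x ?i] => is_var x;
      lazymatch type of (x i) with S2 => case: (x i) end
  end; cbn; intuition (done || congruence).

Ltac coordwise := apply: functional_extensionality => i; s2_cases.

Lemma S2n_le_trans x y z : S2n_le x y -> S2n_le y z -> S2n_le x z.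
Proof. by move=> Hxy Hyz i; move: (Hxy i) (Hyz i); s2_cases. Qed.

Lemma S2n_le_anti x y : S2n_le x y -> S2n_le y x -> x = y.
Proof.
by move=> Hxy Hyx; apply: functional_extensionality => i; move: (Hxy i) (Hyx i); s2_cases.
Qed.

Lemma S2n_meet_le_l x y : S2n_le (S2n_meet x y) x.
Proof. by move=> i; s2_cases. Qed.

Lemma S2n_meet_le_r x y : S2n_le (S2n_meet x y) y.
Proof. by move=> i; s2_cases. Qed.

Lemma S2n_meet_glb x y z : S2n_le z x -> S2n_le z y -> S2n_le z (S2n_meet x y).
Proof. by move=> Hx Hy i; move: (Hx i) (Hy i); s2_cases. Qed.

Lemma S2n_joinC x y : S2n_join x y = S2n_join y x.
Proof. by coordwise. Qed.

Lemma S2n_le_compatible x y z : S2n_le x z -> S2n_le y z -> S2n_compatible x y.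
Proof. by move=> Hx Hy i; move: (Hx i) (Hy i); s2_cases. Qed.

Lemma S2n_compatibleC x y : S2n_compatible x y -> S2n_compatible y x.
Proof. by move=> Hc i; move: (Hc i); s2_cases. Qed.

Lemma S2n_join_ub_l x y : S2n_compatible x y -> S2n_le x (S2n_join x y).
Proof. by move=> Hc i; move: (Hc i); s2_cases. Qed.

Lemma S2n_join_ub_r x y : S2n_compatible x y -> S2n_le y (S2n_join x y).
Proof. by move=> Hc i; move: (Hc i); s2_cases. Qed.

Lemma S2n_join_lub x y z : S2n_le x z -> S2n_le y z -> S2n_le (S2n_join x y) z.
Proof. by move=> Hx Hy i; move: (Hx i) (Hy i); s2_cases. Qed.

Lemma S2n_compatible3 x y z :
  S2n_compatible x y -> S2n_compatible x z -> S2n_compatible y z ->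
  exists w, [/\ S2n_le x w, S2n_le y w & S2n_le z w].
Proof.
move=> Cxy Cxz Cyz; have Cj : S2n_compatible (S2n_join x y) z.
  by move=> i; move: (Cxy i) (Cxz i) (Cyz i); s2_cases.
exists (S2n_join (S2n_join x y) z); split; last exact: S2n_join_ub_r.
- exact: S2n_le_trans (S2n_join_ub_l Cxy) (S2n_join_ub_l Cj).
- exact: S2n_le_trans (S2n_join_ub_r Cxy) (S2n_join_ub_l Cj).
Qed.

Lemma S2n_compat_part_le x y : S2n_le (S2n_compat_part x y) y.
Proof. by move=> i; s2_cases. Qed.

Lemma S2n_meet_le_compat_part x y : S2n_le (S2n_meet x y) (S2n_compat_part x y).
Proof. by move=> i; s2_cases. Qed.

Lemma S2n_compatible_compat_part x y : S2n_compatible x (S2n_compat_part x y).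
Proof. by move=> i; s2_cases. Qed.

Lemma S2n_compat_part_max x y z :
  S2n_le z y -> S2n_compatible x z -> S2n_le z (S2n_compat_part x y).
Proof. by move=> Hzy Hc i; move: (Hzy i) (Hc i); s2_cases. Qed.

Lemma S2n_join_compat_part x y : S2n_join x (S2n_compat_part x y) = S2n_joinL x y.
Proof. by coordwise. Qed.

Lemma S2n_joinL_meet_l x y : S2n_meet (S2n_joinL x y) x = x.
Proof. by coordwise. Qed.

Lemma S2n_joinL_meet_r x y : S2n_meet (S2n_joinL x y) y = S2n_compat_part x y.
Proof. by coordwise. Qed.

Lemma S2n_meet_joinLR x y : S2n_meet (S2n_joinL x y) (S2n_joinL y x) = S2n_join x y.
Proof. by coordwise. Qed.

Lemma S2n_joinL_joinLR x y : S2n_joinL (S2n_joinL x y) (S2n_joinL y x) = S2n_joinL x y.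
Proof. by coordwise. Qed.

Lemma S2n_join_join x y : S2n_join x (S2n_join x y) = S2n_joinL x y.
Proof. by coordwise. Qed.

Lemma S2n_join_meet_join x y :
  S2n_join (S2n_meet x (S2n_join x y)) y = S2n_joinL y x.
Proof. by coordwise. Qed.

Lemma S2n_meet_meet_join x y :
  S2n_meet (S2n_meet x (S2n_join x y)) y = S2n_meet x y.
Proof. by coordwise. Qed.

Lemma S2n_joinL_compatible x y : S2n_compatible x y -> S2n_joinL x y = S2n_join x y.
Proof. by move=> Hc; apply: functional_extensionality => i; move: (Hc i); s2_cases. Qed.

Lemma S2n_compatible_joinLR x y :
  S2n_compatible (S2n_joinL x y) (S2n_joinL y x) -> S2n_compatible x y.
Proof. by move=> Hc i; move: (Hc i); s2_cases. Qed.

Lemma S2n_joinLR_neq x y : ~ S2n_compatible x y -> S2n_joinL x y <> S2n_joinL y x.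
Proof. by move=> Hc E; apply: Hc => i; move: (f_equal (fun g => g i) E); s2_cases. Qed.

Lemma S2n_conflictsC x y : S2n_conflicts x y = S2n_conflicts y x.
Proof. by apply: eq_bigr => i _; s2_cases. Qed.

Lemma S2n_distC x y : S2n_dist x y = S2n_dist y x.
Proof. by apply: eq_bigr => i _; s2_cases. Qed.

Lemma S2n_dist_meet x y :
  S2n_dist x y + S2n_rank (S2n_meet x y) + S2n_rank (S2n_meet x y) = S2n_rank x + S2n_rank y.
Proof. by rewrite /S2n_dist /S2n_rank -!big_split; apply: eq_bigr => i _; s2_cases. Qed.

Lemma S2n_rank_modular x y : S2n_compatible x y ->
  S2n_rank x + S2n_rank y = S2n_rank (S2n_meet x y) + S2n_rank (S2n_join x y).
Proof.
by move=> Hc; rewrite /S2n_rank -!big_split; apply: eq_bigr => i _; move: (Hc i); s2_cases.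
Qed.

Lemma S2n_rank_compat_part x y :
  S2n_rank (S2n_compat_part x y) + S2n_conflicts x y = S2n_rank y.
Proof. by rewrite /S2n_rank /S2n_conflicts -!big_split; apply: eq_bigr => i _; s2_cases. Qed.

Lemma S2n_rank_joinL x y :
  S2n_rank (S2n_joinL x y) + S2n_rank (S2n_meet x y) + S2n_conflicts x y =
  S2n_rank x + S2n_rank y.
Proof. by rewrite /S2n_rank /S2n_conflicts -!big_split; apply: eq_bigr => i _; s2_cases. Qed.

Lemma S2n_dist_joinL x y :
  S2n_dist x (S2n_joinL x y) + S2n_dist (S2n_joinL x y) y = S2n_dist x y.
Proof. by rewrite /S2n_dist -!big_split; apply: eq_bigr => i _; s2_cases. Qed.

Lemma S2n_rank_join_bound a b x y : S2n_le a x -> S2n_le b y -> S2n_compatible a b ->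
  S2n_rank (S2n_join a b) + S2n_conflicts x y + S2n_rank (S2n_meet x y) <=
  S2n_rank x + S2n_rank y.
Proof.
move=> Hax Hby Hc; rewrite /S2n_rank /S2n_conflicts -!big_split; apply: leq_sum => i _.
by move: (Hax i) (Hby i) (Hc i); s2_cases.
Qed.

Lemma S2n_neq_coord x y : x <> y -> exists j, x j <> y j.
Proof.
move=> Hne; apply: NNPP => Hno; apply: Hne; apply: functional_extensionality => i.
by apply: NNPP => Hi; apply: Hno; exists i.
Qed.

Lemma S2n_rank_le x y : S2n_le x y -> S2n_rank x <= S2n_rank y.
Proof. by move=> Hxy; apply: leq_sum => i _; move: (Hxy i); s2_cases. Qed.

Lemma S2n_rank_lt x y : S2n_le x y -> x <> y -> S2n_rank x < S2n_rank y.
Proof.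
move=> Hxy /S2n_neq_coord [j Hj]; apply: (ltn_sum (j := j)) => [i|].
  by move: (Hxy i); s2_cases.
by move: (Hxy j) Hj; s2_cases.
Qed.

Lemma S2n_rank_eq x y : S2n_le x y -> S2n_rank x = S2n_rank y -> x = y.
Proof. by move=> Hxy E; apply: NNPP => /(S2n_rank_lt Hxy); rewrite E ltnn. Qed.

Lemma S2n_conflicts_gt0 x y : ~ S2n_compatible x y -> 0 < S2n_conflicts x y.
Proof.
move=> Hc; have [j Hj] : exists j, s2_opposite (x j) (y j).
  apply: NNPP => Hno; apply: Hc => i.
  by case E : (s2_opposite (x i) (y i)) => //; case: Hno; exists i.
by apply: (sum_gt0 (j := j)); rewrite Hj.
Qed.

Lemma S2n_conflicts0 x y : S2n_compatible x y -> S2n_conflicts x y = 0.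
Proof. by move=> Hc; rewrite /S2n_conflicts big1 // => i _; rewrite Hc. Qed.

Lemma S2n_dist0 x y : S2n_dist x y = 0 -> x = y.
Proof.
move=> H0; apply: NNPP => /S2n_neq_coord [j Hj].
have : 0 < S2n_dist x y by apply: (sum_gt0 (j := j)); move: Hj; s2_cases.
by rewrite H0.
Qed.

Lemma S2n_upd_le x j : S2n_le (S2n_upd x j S0) x.
Proof. by move=> i; rewrite /S2n_upd; case: eqP; [left | right]. Qed.

Lemma S2n_upd_ge x j c : x j = S0 -> S2n_le x (S2n_upd x j c).
Proof. by move=> Hj i; rewrite /S2n_upd; case: eqP => [->|_]; [left | right]. Qed.

Lemma S2n_rank_upd x j c :
  S2n_rank (S2n_upd x j c) + s2_nonzero (x j) = S2n_rank x + s2_nonzero c.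
Proof.
have := @sum_update _ (fun i => s2_nonzero (S2n_upd x j c i) : nat)
  (fun i => s2_nonzero (x i) : nat) j.
by rewrite /S2n_upd eqxx; apply=> i /negbTE ->.
Qed.

Lemma S2n_dist_upd x j c y :
  S2n_dist (S2n_upd x j c) y + s2_dist (x j) (y j) = S2n_dist x y + s2_dist c (y j).
Proof.
have := @sum_update _ (fun i => s2_dist (S2n_upd x j c i) (y i))
  (fun i => s2_dist (x i) (y i)) j.
by rewrite /S2n_upd eqxx; apply=> i /negbTE ->.
Qed.

Lemma S2n_rank_clear x j : x j <> S0 -> S2n_rank x = (S2n_rank (S2n_upd x j S0)).+1.
Proof. by move: (S2n_rank_upd x j S0); case: (x j) => //= ? _; lia. Qed.

Lemma S2n_rank_fill x j c : x j = S0 -> c <> S0 ->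
  S2n_rank (S2n_upd x j c) = (S2n_rank x).+1.
Proof. by move=> Hxj; move: (S2n_rank_upd x j c); rewrite Hxj; case: c => //= ? _; lia. Qed.

Lemma S2n_rank_up x y : S2n_le x y -> x <> y ->
  exists z, [/\ S2n_le x z, S2n_le z y & S2n_rank z = (S2n_rank x).+1].
Proof.
move=> Hxy /S2n_neq_coord [j Hj]; have Hxj : x j = S0 by case: (Hxy j) Hj.
exists (S2n_upd x j (y j)); split; first exact: S2n_upd_ge.
- by move=> i; rewrite /S2n_upd; case: eqP => [->|_]; [right | apply: Hxy].
- by apply: S2n_rank_fill => // Hyj; apply: Hj; rewrite Hxj Hyj.
Qed.

Lemma S2n_desc_rank x : exists l, length l = S2n_rank x /\ desc (@S2n_le n) x l.
Proof.
move Ek : (S2n_rank x) => k; elim: k x Ek => [|k IH] x Ek; first by exists nil.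
have [j Hj] : exists j, x j <> S0.
  apply: NNPP => Hno; suff : S2n_rank x = 0 by lia.
  by rewrite /S2n_rank big1 // => i _; case E : (x i) => //; case: Hno; exists i; rewrite E.
have Hrk := S2n_rank_clear Hj; have [l [Hl Hd]] := IH (S2n_upd x j S0) ltac:(lia).
exists (S2n_upd x j S0 :: l); split; first by rewrite /= Hl.
split=> //; split; first exact: S2n_upd_le.
by move=> E; move: Hrk; rewrite E; lia.
Qed.

Lemma S2n_dist_step x y : x <> y -> exists z,
  ((S2n_le x z /\ S2n_rank z = (S2n_rank x).+1) \/
   (S2n_le z x /\ S2n_rank x = (S2n_rank z).+1)) /\
  (S2n_dist z y).+1 = S2n_dist x y.
Proof.
move=> Hne; have [[j [Hj0 Hjy]] | Hno] := classic (exists j, x j <> S0 /\ x j <> y j).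
  exists (S2n_upd x j S0); split.
    by right; split; [apply: S2n_upd_le | apply: S2n_rank_clear].
  by move: (S2n_dist_upd x j S0 y); case: (x j) Hj0 Hjy; case: (y j) => //=; lia.
have [j Hj] := S2n_neq_coord Hne.
have Hxj : x j = S0 by apply: NNPP => Hj0; apply: Hno; exists j.
have Hyj : y j <> S0 by move=> Hyj; apply: Hj; rewrite Hxj Hyj.
exists (S2n_upd x j (y j)); split; first by left; split; [apply: S2n_upd_ge | apply: S2n_rank_fill].
by move: (S2n_dist_upd x j (y j) y); rewrite Hxj; case: (y j) Hyj => //=; lia.
Qed.

End SignVectors.

(** * Cone coefficients and plane polygons *)

Section ConeCoefficients.
Local Open Scope R_scope.

Lemma angle_cone_sub a b a' b' :
  0 <= b <= a -> a <= PI / 2 -> 0 <= b' <= a' -> a' <= PI / 2 ->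
  (forall w, angle_cone a b w -> angle_cone a' b' w) -> a <= a' /\ b' <= b.
Proof.
move=> Hba Ha Hba' Ha' Hsub.
have PIpos := PI_RGT_0.
have [Hsa Hca] : 0 <= sin a /\ 0 <= cos a by split; [apply: sin_ge_0 | apply: cos_ge_0]; lra.
have [Hsb Hcb] : 0 <= sin b /\ 0 <= cos b by split; [apply: sin_ge_0 | apply: cos_ge_0]; lra.
have := sin_ge_0 (a - b); rewrite sin_minus => Hab.
have [_ [_ [Hxa _]]] : angle_cone a' b' (cos a, sin a).
  by apply: Hsub; rewrite /angle_cone /=; repeat split; lra.
have [_ [_ [_ Hxb]]] : angle_cone a' b' (cos b, sin b).
  by apply: Hsub; rewrite /angle_cone /=; repeat split; lra.
simpl in Hxa, Hxb; split.
- apply: Rnot_lt_le => Hlt; have := sin_gt_0 (a - a'); rewrite sin_minus; lra.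
- apply: Rnot_lt_le => Hlt; have := sin_gt_0 (b' - b); rewrite sin_minus; lra.
Qed.

Lemma angle_cone_inj a b a' b' :
  0 <= b <= a -> a <= PI / 2 -> 0 <= b' <= a' -> a' <= PI / 2 ->
  (forall w, angle_cone a b w <-> angle_cone a' b' w) -> a = a' /\ b = b'.
Proof.
move=> H1 H2 H3 H4 H.
have [] := angle_cone_sub H1 H2 H3 H4 (fun w => proj1 (H w)).
have [] := angle_cone_sub H3 H4 H1 H2 (fun w => proj2 (H w)).
split; lra.
Qed.

Definition angle_weight (t : R) := sin t / (sin t + cos t).

Lemma cone_coeff_angle_cone (C : R * R -> Prop) a b :
  0 <= b <= a -> a <= PI / 2 -> (forall w, C w <-> angle_cone a b w) ->
  cone_coeff C = angle_weight a - angle_weight b.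
Proof.
move=> Hba Ha HC; rewrite /cone_coeff; set ab := epsilon _ _.
have [Hb [Hab [Ha' HCab]]] : 0 <= snd ab /\ snd ab <= fst ab /\ fst ab <= PI / 2 /\
    forall w, C w <-> angle_cone (fst ab) (snd ab) w.
  apply epsilon_spec; exists (a, b); simpl.
  by split; [lra | split; [lra | split; [lra | exact: HC]]].
have [-> ->] : fst ab = a /\ snd ab = b.
  by apply: angle_cone_inj => // w; rewrite -HCab HC.
by [].
Qed.

Lemma cone_coeff_lower (C : R * R -> Prop) :
  (forall w, C w <-> 0 <= fst w /\ 0 <= snd w /\ snd w <= fst w) -> cone_coeff C = 1 / 2.
Proof.
move=> HC; have PIpos := PI_RGT_0; have s2pos := sqrt_lt_R0 2 ltac:(lra).
have Hi : 0 < 1 / sqrt 2 by apply: Rdiv_lt_0_compat; lra.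
rewrite (@cone_coeff_angle_cone _ (PI / 4) 0); try lra.
  by rewrite /angle_weight sin_PI4 cos_PI4 sin_0 cos_0; field; lra.
move=> w; rewrite HC /angle_cone sin_PI4 cos_PI4 sin_0 cos_0.
by split=> [[H1 [H2 H3]]|[H1 [H2 [H3 H4]]]]; repeat split; nra.
Qed.

Lemma cone_coeff_upper (C : R * R -> Prop) :
  (forall w, C w <-> 0 <= fst w /\ 0 <= snd w /\ fst w <= snd w) -> cone_coeff C = 1 / 2.
Proof.
move=> HC; have PIpos := PI_RGT_0; have s2pos := sqrt_lt_R0 2 ltac:(lra).
have Hi : 0 < 1 / sqrt 2 by apply: Rdiv_lt_0_compat; lra.
rewrite (@cone_coeff_angle_cone _ (PI / 2) (PI / 4)); try lra.
  by rewrite /angle_weight sin_PI4 cos_PI4 sin_PI2 cos_PI2; field; lra.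
move=> w; rewrite HC /angle_cone sin_PI4 cos_PI4 sin_PI2 cos_PI2.
by split=> [[H1 [H2 H3]]|[H1 [H2 [H3 H4]]]]; repeat split; nra.
Qed.

Lemma cone_coeff_quadrant (C : R * R -> Prop) :
  (forall w, C w <-> 0 <= fst w /\ 0 <= snd w) -> cone_coeff C = 1.
Proof.
move=> HC; have PIpos := PI_RGT_0.
rewrite (@cone_coeff_angle_cone _ (PI / 2) 0); try lra.
  by rewrite /angle_weight sin_PI2 cos_PI2 sin_0 cos_0; field.
move=> w; rewrite HC /angle_cone sin_PI2 cos_PI2 sin_0 cos_0.
by split=> [[H1 H2]|[H1 [H2 _]]]; repeat split; lra.
Qed.


End ConeCoefficients.

Section PlanePolygon.
Local Open Scope R_scope.

Lemma convex_comb_max_eq (s t v : R) (lam : R) : 0 < lam < 1 -> s <= v -> t <= v ->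
  v = lam * s + (1 - lam) * t -> s = v /\ t = v.
Proof.
by move=> Hlam Hs Ht E; split; nra.
Qed.

Definition normal_cone (K : R * R -> Prop) (v w : R * R) : Prop :=
  0 <= fst w /\ 0 <= snd w /\ forall z, K z -> dot w z <= dot w v.

Variables (a b c : R) (K : R * R -> Prop).
Hypotheses
  (HK : forall z, K z -> [/\ fst z <= a, snd z <= b & fst z + snd z <= a + b - c])
  (KL : K (a, b - c)) (KR : K (a - c, b))
  (Kseg : forall t, 0 <= t <= 1 ->
     K (t * a + (1 - t) * (a - c), t * (b - c) + (1 - t) * b)).

Lemma polygon_extremeL : extreme_point K (a, b - c).
Proof.
split=> // [[s1 s2] [t1 t2] lam Hs Ht Hlam [E1 E2]].
have [/= Hs1 Hs2 Hs3] := HK Hs; have [/= Ht1 Ht2 Ht3] := HK Ht.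
have [Es1 Et1] := convex_comb_max_eq Hlam Hs1 Ht1 E1; subst s1 t1.
have [-> ->] := @convex_comb_max_eq s2 t2 (b - c) lam Hlam ltac:(lra) ltac:(lra) E2.
by [].
Qed.

Lemma polygon_extremeR : extreme_point K (a - c, b).
Proof.
split=> // [[s1 s2] [t1 t2] lam Hs Ht Hlam [E1 E2]].
have [/= Hs1 Hs2 Hs3] := HK Hs; have [/= Ht1 Ht2 Ht3] := HK Ht.
have [Es2 Et2] := convex_comb_max_eq Hlam Hs2 Ht2 E2; subst s2 t2.
have [-> ->] := @convex_comb_max_eq s1 t1 (a - c) lam Hlam ltac:(lra) ltac:(lra) E1.
by [].
Qed.

Lemma polygon_cw_maximalL : cw_maximal K (a, b - c).
Proof. by split=> // [[z1 z2]] /HK [/= H1 H2 H3] /= H1' H2'; f_equal; lra. Qed.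

Lemma polygon_cw_maximalR : cw_maximal K (a - c, b).
Proof. by split=> // [[z1 z2]] /HK [/= H1 H2 H3] /= H1' H2'; f_equal; lra. Qed.

Lemma polygon_cw_maximal_diag z : cw_maximal K z -> fst z + snd z = a + b - c.
Proof.
case: z => [z1 z2] [/HK [/= H1 H2 H3] Hmax] /=.
apply: Rle_antisym => //; apply: Rnot_lt_le => Hlt.
have [Hz1|Hz1] := Rle_lt_dec z1 (a - c).
  by have [E1 E2] := Hmax _ KR Hz1 ltac:(simpl; lra); lra.
set z1' := Rmin a (a + b - c - z2); set t := (z1' - (a - c)) / c.
have Hz1' : z1 <= z1' /\ z1' <= a /\ z1' <= a + b - c - z2.
  by rewrite /z1'; split; [apply: Rmin_glb; lra | split; [apply: Rmin_l | apply: Rmin_r]].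
have Htc : t * c = z1' - (a - c) by rewrite /t; field; lra.
have Ht : 0 <= t <= 1 by split; apply: (Rmult_le_reg_r c); lra.
have [/= E1 E2] := Hmax _ (Kseg Ht) ltac:(simpl; nra) ltac:(simpl; nra).
nra.
Qed.

Lemma polygon_vertex z : extreme_point K z -> cw_maximal K z ->
  z = (a, b - c) \/ z = (a - c, b).
Proof.
move=> Hext Hcw; have Hdiag := polygon_cw_maximal_diag Hcw.
case: z Hext Hcw Hdiag => [z1 z2] [/HK [/= H1 H2 H3] Hext] _ /= Hdiag.
have [E1|N1] := Req_dec z1 a; first by left; f_equal; lra.
have [E1|N1'] := Req_dec z1 (a - c); first by right; f_equal; lra.
set t := (z1 - (a - c)) / c.
have Htc : t * c = z1 - (a - c) by rewrite /t; field; lra.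
have Ht : 0 < t < 1 by split; apply: (Rmult_lt_reg_r c); lra.
have [[E _] _] := Hext _ _ t KL KR Ht ltac:(simpl; f_equal; nra).
lra.
Qed.

Lemma normal_coneL_lower : 0 < c -> forall w,
  normal_cone K (a, b - c) w <-> 0 <= fst w /\ 0 <= snd w /\ snd w <= fst w.
Proof.
move=> Hc0 [w1 w2]; rewrite /normal_cone /dot /=; split.
  move=> [H1 [H2 /(_ _ KR) /= H3]]; split=> //; split=> //.
  by apply: (Rmult_le_reg_r c); lra.
move=> [H1 [H2 H3]]; split=> //; split=> // [[z1 z2]] /HK [/= Q1 Q2 Q3].
have : 0 <= (w1 - w2) * (a - z1) by apply: Rmult_le_pos; lra.
have : 0 <= w2 * (a + b - c - z1 - z2) by apply: Rmult_le_pos; lra.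
nra.
Qed.

Lemma normal_coneR_upper : 0 < c -> forall w,
  normal_cone K (a - c, b) w <-> 0 <= fst w /\ 0 <= snd w /\ fst w <= snd w.
Proof.
move=> Hc0 [w1 w2]; rewrite /normal_cone /dot /=; split.
  move=> [H1 [H2 /(_ _ KL) /= H3]]; split=> //; split=> //.
  by apply: (Rmult_le_reg_r c); lra.
move=> [H1 [H2 H3]]; split=> //; split=> // [[z1 z2]] /HK [/= Q1 Q2 Q3].
have : 0 <= (w2 - w1) * (b - z2) by apply: Rmult_le_pos; lra.
have : 0 <= w1 * (a + b - c - z1 - z2) by apply: Rmult_le_pos; lra.
nra.
Qed.

Lemma normal_cone_corner : c = 0 -> forall w,
  normal_cone K (a, b - c) w <-> 0 <= fst w /\ 0 <= snd w.
Proof.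
move=> Hc0 [w1 w2]; rewrite /normal_cone /dot /=; split; first by case=> ? [].
move=> [H1 H2]; split=> //; split=> // [[z1 z2]] /HK [/= Q1 Q2 Q3].
have : 0 <= w1 * (a - z1) by apply: Rmult_le_pos; lra.
have : 0 <= w2 * (b - z2) by apply: Rmult_le_pos; lra.
nra.
Qed.

End PlanePolygon.

(** * Frames and joins in a polar space *)

Section PolarSpace.
Variables (T : Type) (le : T -> T -> Prop) (meet : T -> T -> T) (n : nat)
  (Frame : (T -> Prop) -> Prop).
Hypothesis HL : is_polar_space le meet n Frame.

Lemma le_refl x : le x x.
Proof. by case: HL => [[H _] _]; apply: H. Qed.

Lemma le_anti x y : le x y -> le y x -> x = y.
Proof. by case: HL => [[_ [H _]] _]; apply: H. Qed.

Lemma le_trans x y z : le x y -> le y z -> le x z.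
Proof. by case: HL => [[_ [_ [H _]]] _]; apply: H. Qed.

Lemma leIl x y : le (meet x y) x.
Proof. by case: HL => [[_ [_ [_ H]]] _]; case: (H x y). Qed.

Lemma leIr x y : le (meet x y) y.
Proof. by case: HL => [[_ [_ [_ H]]] _]; case: (H x y) => _ []. Qed.

Lemma meet_glb x y z : le z x -> le z y -> le z (meet x y).
Proof. by case: HL => [[_ [_ [_ H]]] _]; case: (H x y) => _ [_]; apply. Qed.

Lemma meetC x y : meet x y = meet y x.
Proof. by apply: le_anti; apply: meet_glb; (apply: leIl || apply: leIr). Qed.

Lemma meet_l x y : le x y -> meet x y = x.
Proof. by move=> Hxy; apply: le_anti; [apply: leIl | apply: meet_glb => //; apply: le_refl]. Qed.

Lemma frame_meet_closed F x y : Frame F -> F x -> F y -> F (meet x y).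
Proof. by move=> HF Hx Hy; case: HL => _ [_ [H _]]; apply: (H F HF). Qed.

Lemma frame_iso_exists F : Frame F -> exists psi : S2n n -> T, frame_iso le F psi.
Proof. by move=> HF; case: HL => _ [_ [_ [H _]]]; apply: H. Qed.

Lemma frame_of_chains C D : is_chain le C -> is_chain le D ->
  exists F, [/\ Frame F, forall x, C x -> F x & forall x, D x -> F x].
Proof.
case: HL => _ [_ [_ [_ [H _]]]] HC HD.
by have [F [HF [HCF HDF]]] := H C D HC HD; exists F.
Qed.

Lemma is_chain1 a : is_chain le (fun z => z = a).
Proof. by move=> x y -> ->; left; apply: le_refl. Qed.

Lemma is_chain2 a b : le a b -> is_chain le (fun z => z = a \/ z = b).
Proof. by move=> Hab x y [->|->] [->|->]; auto using le_refl. Qed.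

Lemma is_chain3 a b c : le a b -> le b c ->
  is_chain le (fun z => z = a \/ z = b \/ z = c).
Proof.
by move=> Hab Hbc x y [->|[->|->]] [->|[->|->]]; eauto using le_refl, le_trans.
Qed.

(* (P1) puts C' and D' in one frame, and (P2) maps it onto F fixing C and D. *)
Lemma frame_transport F C D C' D' : Frame F ->
  is_chain le C -> is_chain le D -> is_chain le C' -> is_chain le D' ->
  (forall a, C a \/ D a -> F a /\ (C' a \/ D' a)) ->
  exists phi : T -> T,
    [/\ forall a, C' a \/ D' a -> F (phi a),
        forall a b, C' a \/ D' a -> C' b \/ D' b -> (le (phi a) (phi b) <-> le a b)
      & forall a, C a \/ D a -> phi a = a].
Proof.
move=> HF HC HD HC' HD' HCD.
have [F' [HF' HC'F' HD'F']] := frame_of_chains HC' HD'.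
have inF' a : C' a \/ D' a -> F' a by case=> [/HC'F' | /HD'F'].
case: HL => _ [_ [_ [_ [_ P2]]]].
have HCF a : C a -> F' a /\ F a.
  by move=> Ha; have [? ?] := HCD a (or_introl Ha); split=> //; apply: inF'.
have HDF a : D a -> F' a /\ F a.
  by move=> Ha; have [? ?] := HCD a (or_intror Ha); split=> //; apply: inF'.
have [phi [[phiF [_ phile]] [phiC phiD]]] := P2 F' F C D HF' HF HC HD HCF HDF.
exists phi; split.
- by move=> a /inF' /phiF.
- by move=> a b /inF' Ha /inF' Hb; apply: phile.
- by move=> a [/phiC | /phiD].
Qed.

Section FrameIso.
Variables (F : T -> Prop) (psi : S2n n -> T).
Hypotheses (HF : Frame F) (Hpsi : frame_iso le F psi).

Lemma frame_iso_in x : F (psi x).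
Proof. by case: Hpsi. Qed.

Lemma frame_iso_surj y : F y -> exists x, psi x = y.
Proof. by case: Hpsi => _ [H _]; apply: H. Qed.

Lemma frame_iso_le x y : le (psi x) (psi y) <-> S2n_le x y.
Proof. by case: Hpsi => _ [_ H]; apply: H. Qed.

Lemma frame_iso_inj x y : psi x = psi y -> x = y.
Proof. by move=> E; apply: S2n_le_anti; apply/frame_iso_le; rewrite E; apply: le_refl. Qed.

Lemma frame_iso_meet x y : meet (psi x) (psi y) = psi (S2n_meet x y).
Proof.
have [z Hz] := frame_iso_surj (frame_meet_closed HF (frame_iso_in x) (frame_iso_in y)).
rewrite -Hz; congr psi; apply: S2n_le_anti.
- by apply: S2n_meet_glb; apply/frame_iso_le; rewrite Hz; [apply: leIl | apply: leIr].
- by apply/frame_iso_le; rewrite Hz; apply: meet_glb; apply/frame_iso_le;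
    [apply: S2n_meet_le_l | apply: S2n_meet_le_r].
Qed.

Lemma frame_iso_join x y : S2n_compatible x y ->
  is_join le (psi x) (psi y) (psi (S2n_join x y)).
Proof.
move=> Hc; set J := S2n_join x y.
have HxJ : le (psi x) (psi J) by apply/frame_iso_le/S2n_join_ub_l.
have HyJ : le (psi y) (psi J) by apply/frame_iso_le/S2n_join_ub_r.
split=> //; split=> // w Hxw Hyw.
have [|phi [phiF phile phiid]] := frame_transport HF
  (is_chain2 HxJ) (is_chain2 HyJ) (is_chain2 Hxw) (is_chain2 HyJ).
  by move=> a [[]|[]] ->; split; auto using frame_iso_in.
have [v Hv] := frame_iso_surj (phiF w ltac:(auto)).
have Hphi z : z = x \/ z = y \/ z = J -> (le (psi z) w <-> S2n_le z v).
  move=> Hz; have HzCD : (psi z = psi x \/ psi z = psi J) \/ (psi z = psi y \/ psi z = psi J).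
    by case: Hz => [|[]] ->; auto.
  have HzCD' : (psi z = psi x \/ psi z = w) \/ (psi z = psi y \/ psi z = psi J).
    by case: Hz => [|[]] ->; auto.
  by rewrite -frame_iso_le Hv -{2}(phiid _ HzCD); apply: iff_sym; apply: phile; auto.
apply/Hphi; first by auto.
by apply: S2n_join_lub; apply/Hphi; auto.
Qed.

Lemma frame_iso_ub_compatible x y w :
  le (psi x) w -> le (psi y) w -> S2n_compatible x y.
Proof.
move=> Hxw Hyw.
have [|phi [phiF phile phiid]] := frame_transport HF
  (is_chain1 (a := psi x)) (is_chain1 (a := psi y)) (is_chain2 Hxw) (is_chain1 (a := psi y)).
  by move=> a [] ->; split; auto using frame_iso_in.
have [v Hv] := frame_iso_surj (phiF w ltac:(auto)).
have Hphi z : z = x \/ z = y -> le (psi z) w -> S2n_le z v.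
  move=> Hz; have HzCD : psi z = psi x \/ psi z = psi y by case: Hz => ->; auto.
  have HzCD' : (psi z = psi x \/ psi z = w) \/ psi z = psi y by case: Hz => ->; auto.
  by rewrite -frame_iso_le Hv -{2}(phiid _ HzCD) => Hzw; apply/phile; auto.
by apply: (@S2n_le_compatible _ x y v); apply: Hphi; auto.
Qed.

End FrameIso.

Lemma frame_of_pair a b : exists F, [/\ Frame F, F a & F b].
Proof.
have [F [HF Ha Hb]] := frame_of_chains (is_chain1 (a := a)) (is_chain1 (a := b)).
by exists F; split; [| apply: Ha | apply: Hb].
Qed.

Lemma frame_coords a b : exists F (psi : S2n n -> T) x y,
  [/\ Frame F, frame_iso le F psi, psi x = a & psi y = b].
Proof.
have [F [HF Ha Hb]] := frame_of_pair a b; have [psi Hpsi] := frame_iso_exists HF.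
have [x Hx] := frame_iso_surj Hpsi Ha; have [y Hy] := frame_iso_surj Hpsi Hb.
by exists F, psi, x, y.
Qed.

Lemma is_join_unique a b z z' : is_join le a b z -> is_join le a b z' -> z = z'.
Proof. by move=> [H1 [H2 H3]] [H1' [H2' H3']]; apply: le_anti; auto. Qed.

Lemma has_join_frame F (psi : S2n n -> T) x y : Frame F -> frame_iso le F psi ->
  has_join le (psi x) (psi y) -> S2n_compatible x y.
Proof. by move=> HF Hpsi [z [Hxz [Hyz _]]]; exact: (frame_iso_ub_compatible HF Hpsi Hxz Hyz). Qed.

Lemma is_join_frame F (psi : S2n n -> T) x y z : Frame F -> frame_iso le F psi ->
  is_join le (psi x) (psi y) z -> z = psi (S2n_join x y).
Proof.
move=> HF Hpsi Hj; apply: (is_join_unique Hj); apply: (frame_iso_join HF Hpsi).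
exact: (has_join_frame HF Hpsi (ex_intro _ z Hj)).
Qed.

Lemma ub_has_join a b w : le a w -> le b w -> has_join le a b.
Proof.
have [F [psi [x [y [HF Hpsi <- <-]]]]] := frame_coords a b => Haw Hbw.
exists (psi (S2n_join x y)); apply: (frame_iso_join HF Hpsi).
exact: (frame_iso_ub_compatible HF Hpsi Haw Hbw).
Qed.

Lemma has_join_join p v w s :
  is_join le v w s -> has_join le p v -> has_join le p w -> has_join le p s.
Proof.
move=> [Hvs [Hws Hs]] [zv [Hpz [Hvz _]]] Hpw.
have [F [HF HFws HFpz]] := frame_of_chains (is_chain2 Hws) (is_chain2 Hpz).
have [psi Hpsi] := frame_iso_exists HF.
have [W HW] := frame_iso_surj Hpsi (HFws w (or_introl erefl)).
have [S HS] := frame_iso_surj Hpsi (HFws s (or_intror erefl)).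
have [P HP] := frame_iso_surj Hpsi (HFpz p (or_introl erefl)).
have [Z HZ] := frame_iso_surj Hpsi (HFpz zv (or_intror erefl)).
subst w s p zv.
have CPM : S2n_compatible P (S2n_meet S Z).
  by apply: (@S2n_le_compatible _ _ _ Z); [apply/(frame_iso_le Hpsi) | apply: S2n_meet_le_r].
have CMW : S2n_compatible (S2n_meet S Z) W.
  by apply: (@S2n_le_compatible _ _ _ S); [apply: S2n_meet_le_l | apply/(frame_iso_le Hpsi)].
have [E [HPE HME HWE]] := S2n_compatible3 CPM (has_join_frame HF Hpsi Hpw) CMW.
apply: (@ub_has_join _ _ (psi E)); first exact/(frame_iso_le Hpsi).
apply: Hs; last exact/(frame_iso_le Hpsi).
apply: (@le_trans _ (psi (S2n_meet S Z))); last exact/(frame_iso_le Hpsi).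
by rewrite -(frame_iso_meet HF Hpsi); apply: meet_glb.
Qed.

Section FrameJoins.
Variables (F : T -> Prop) (psi : S2n n -> T).
Hypotheses (HF : Frame F) (Hpsi : frame_iso le F psi).

Lemma frame_iso_joinL_part x y :
  is_join le (psi x) (psi (S2n_compat_part x y)) (psi (S2n_joinL x y)).
Proof.
rewrite -S2n_join_compat_part; apply: (frame_iso_join HF Hpsi).
exact: S2n_compatible_compat_part.
Qed.

Lemma frame_compat_part_max x y v : le v (psi y) -> has_join le (psi x) v ->
  le v (psi (S2n_compat_part x y)).
Proof.
move=> Hvy Hxv; set U := psi (S2n_compat_part x y).
have Fpsi := frame_iso_in Hpsi; have FU : F U by apply: Fpsi.
have HUy : le U (psi y) by apply/(frame_iso_le Hpsi)/S2n_compat_part_le.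
have [s Hs] := ub_has_join Hvy HUy.
have [z [Hxz [Hsz _]]] := has_join_join Hs Hxv (ex_intro _ _ (frame_iso_joinL_part x y)).
case: Hs => Hvs [HUs Hs]; have Hsy : le s (psi y) by apply: Hs.
have [|phi [phiF phile phiid]] := frame_transport HF
  (is_chain2 HUy) (is_chain1 (a := psi x)) (is_chain3 HUs Hsy) (is_chain2 Hxz).
  by move=> a [[]|] ->; split; auto.
have [s' Hs'] := frame_iso_surj Hpsi (phiF s ltac:(auto)).
have [z' Hz'] := frame_iso_surj Hpsi (phiF z ltac:(auto)).
have Hphi a b : a = U \/ a = s \/ a = psi y \/ a = psi x \/ a = z ->
                b = U \/ b = s \/ b = psi y \/ b = psi x \/ b = z ->
                le a b -> le (phi a) (phi b).
  move=> Ha Hb; apply: (proj2 (phile a b _ _)); intuition.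
have Hs'y : S2n_le s' y.
  by apply/(frame_iso_le Hpsi); rewrite Hs' -(phiid (psi y)); auto; apply: Hphi; auto.
have Hs'z' : S2n_le s' z'.
  by apply/(frame_iso_le Hpsi); rewrite Hs' Hz'; apply: Hphi; auto.
have Hxz' : S2n_le x z'.
  by apply/(frame_iso_le Hpsi); rewrite Hz' -(phiid (psi x)); auto; apply: Hphi; auto.
apply: (le_trans Hvs); apply: (proj1 (phile s U _ _)); try by auto.
rewrite -Hs' (phiid U); last by auto.
apply/(frame_iso_le Hpsi); apply: S2n_compat_part_max => //.
exact: (S2n_le_compatible Hxz' Hs'z').
Qed.

Lemma joinL_spec_frame x y z :
  joinL_spec le meet (psi x) (psi y) z <-> z = psi (S2n_joinL x y).
Proof.
set U := psi (S2n_compat_part x y).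
have HUy : le U (psi y) by apply/(frame_iso_le Hpsi)/S2n_compat_part_le.
have HmU : le (meet (psi x) (psi y)) U.
  by rewrite (frame_iso_meet HF Hpsi); apply/(frame_iso_le Hpsi)/S2n_meet_le_compat_part.
have HJ := frame_iso_joinL_part x y.
split.
- move=> [u [Hmu [Huy [Hxu [Hmax Hz]]]]].
  have Hu : le u U by apply: frame_compat_part_max.
  have Eu : u = U by apply: Hmax => //; exists (psi (S2n_joinL x y)).
  by subst u; apply: is_join_unique Hz HJ.
- move=> ->; exists U; do !split=> //; first by exists (psi (S2n_joinL x y)).
  by move=> v Hmv Hvy Hxv HUv; apply: le_anti => //; apply: frame_compat_part_max.
Qed.

Lemma joinL_frame x y : joinL le meet (psi x) (psi y) = psi (S2n_joinL x y).
Proof. by apply: epsilon_unique => [|z /joinL_spec_frame //]; apply/joinL_spec_frame. Qed.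

Lemma joinR_frame x y : joinR le meet (psi x) (psi y) = psi (S2n_joinL y x).
Proof.
have Hspec z : joinR_spec le meet (psi x) (psi y) z <-> z = psi (S2n_joinL y x).
  by rewrite -joinL_spec_frame /joinR_spec /joinL_spec meetC.
by apply: epsilon_unique => [|z /Hspec //]; apply/Hspec.
Qed.

Lemma pjoin_frame x y : pjoin le meet (psi x) (psi y) = psi (S2n_join x y).
Proof.
by rewrite /pjoin joinL_frame joinR_frame (frame_iso_meet HF Hpsi) S2n_meet_joinLR.
Qed.

End FrameJoins.

Lemma pjoin_submodular_iff_frame_bisubmodular (f : T -> ER) :
  pjoin_submodular le meet f <-> frame_bisubmodular le n Frame f.
Proof.
split=> [Hf F HF | Hf p q].
  have [psi Hpsi] := frame_iso_exists HF; exists psi; split=> // x y.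
  by move: (Hf (psi x) (psi y)); rewrite (frame_iso_meet HF Hpsi) (pjoin_frame HF Hpsi).
have [F [HF Hp Hq]] := frame_of_pair p q; have [psi [Hpsi Hb]] := Hf F HF.
have [x <-] := frame_iso_surj Hpsi Hp; have [y <-] := frame_iso_surj Hpsi Hq.
by rewrite (frame_iso_meet HF Hpsi) (pjoin_frame HF Hpsi); apply: Hb.
Qed.

(** * Rank and distance *)

Lemma desc_le top l : desc le top l -> forall z, In z l -> le z top.
Proof.
elim: l top => [|y l IH] top //= [[Hyt _] Hd] z [<-|Hz] //.
exact: le_trans (IH y Hd z Hz) Hyt.
Qed.

Lemma desc_chain top l : desc le top l -> is_chain le (fun z => z = top \/ In z l).
Proof.
elim: l top => [|y l IH] top Hd a b.
  by move=> [->|[]] [->|[]]; left; apply: le_refl.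
have Hle := desc_le Hd; case: Hd => _ /IH Hc.
move=> [->|Ha] [->|Hb]; first (by left; apply: le_refl).
- by right; apply: Hle.
- by left; apply: Hle.
- by apply: Hc; case: Ha; case: Hb; auto.
Qed.

Lemma desc_frame_length F (psi : S2n n -> T) x l : frame_iso le F psi ->
  (forall z, In z l -> F z) -> desc le (psi x) l -> length l <= S2n_rank x.
Proof.
move=> Hpsi; elim: l x => [|y l IH] x //= Fl [[Hyx Hne] Hd].
have [y' Ey] := frame_iso_surj Hpsi (Fl y (or_introl erefl)); subst y.
have := IH y' (fun z Hz => Fl z (or_intror Hz)) Hd.
have := S2n_rank_lt (proj1 (frame_iso_le Hpsi y' x) Hyx) (fun E => Hne (f_equal psi E)).
lia.
Qed.

Lemma is_rank_frame F (psi : S2n n -> T) x : Frame F -> frame_iso le F psi ->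
  is_rank le (psi x) (S2n_rank x).
Proof.
move=> HF Hpsi; split.
  have [l [Hl Hd]] := S2n_desc_rank x; exists (map psi l); rewrite length_map; split=> //.
  apply: (desc_map (S := fun _ => True)) Hd => // a b _ _; first by move/(frame_iso_le Hpsi).
  exact: (frame_iso_inj Hpsi).
move=> l Hd; have Hc := desc_chain Hd.
have [|phi [phiF phile phiid]] := frame_transport HF
  (is_chain1 (a := psi x)) (is_chain1 (a := psi x)) Hc Hc.
  by have Fpsi := frame_iso_in Hpsi; move=> a [] ->; split; auto.
have Hphi a b : a = psi x \/ In a l -> b = psi x \/ In b l ->
    (le (phi a) (phi b) <-> le a b) by move=> Ha Hb; apply: phile; left.
rewrite -(length_map phi); apply: (desc_frame_length Hpsi).
  by move=> z /in_map_iff [a [<- Ha]]; apply: phiF; auto.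
rewrite -(phiid (psi x)); last by left.
apply: (desc_map (S := fun z => z = psi x \/ In z l)) Hd; [| | by left | by right].
- by move=> a b Ha Hb /(Hphi a b Ha Hb).
- move=> a b Ha Hb E; apply: le_anti; [apply/(Hphi _ _ Ha Hb) | apply/(Hphi _ _ Hb Ha)];
  by rewrite E; apply: le_refl.
Qed.

Lemma is_rank_unique a k1 k2 : is_rank le a k1 -> is_rank le a k2 -> k1 = k2.
Proof. by move=> [[l1 [<- D1]] B1] [[l2 [<- D2]] B2]; have := B1 _ D2; have := B2 _ D1; lia. Qed.

Lemma rk_frame F (psi : S2n n -> T) : Frame F -> frame_iso le F psi ->
  forall x, rk le (psi x) = S2n_rank x.
Proof.
move=> HF Hpsi x; have Hx := is_rank_frame x HF Hpsi.
by apply: epsilon_unique => // k Hk; apply: is_rank_unique Hk Hx.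
Qed.

Lemma frame_coords_le a b : le a b -> exists F (psi : S2n n -> T) x y,
  [/\ Frame F, frame_iso le F psi, psi x = a, psi y = b & S2n_le x y].
Proof.
have [F [psi [x [y [HF Hpsi <- <-]]]]] := frame_coords a b => Hxy.
by exists F, psi, x, y; split=> //; apply/(frame_iso_le Hpsi).
Qed.

Lemma rk_le a b : le a b -> rk le a <= rk le b.
Proof.
move=> /frame_coords_le [F [psi [x [y [HF Hpsi <- <- Hxy]]]]].
by rewrite !(rk_frame HF Hpsi); apply: S2n_rank_le.
Qed.

Lemma rk_lt a b : le a b -> a <> b -> rk le a < rk le b.
Proof.
move=> /frame_coords_le [F [psi [x [y [HF Hpsi <- <- Hxy]]]]] Hne.
by rewrite !(rk_frame HF Hpsi); apply: S2n_rank_lt => // E; apply: Hne; rewrite E.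
Qed.

Lemma rk_eq a b : le a b -> rk le a = rk le b -> a = b.
Proof. by move=> Hab E; apply: NNPP => /(rk_lt Hab); rewrite E ltnn. Qed.

Lemma covers_rk a b : covers le a b -> rk le b = (rk le a).+1.
Proof.
move=> [[Hab Hne] Hno]; have Hlt := rk_lt Hab Hne.
have [F [psi [x [y [HF Hpsi Ea Eb Hxy]]]]] := frame_coords_le Hab; subst a b.
move: Hlt; rewrite !(rk_frame HF Hpsi) => Hlt.
have [z [Hxz Hzy Hz]] := S2n_rank_up Hxy (fun E => Hne (f_equal psi E)).
apply: NNPP => Hgap; apply: Hno; exists (psi z); split; split.
- exact/(frame_iso_le Hpsi).
- by move/(frame_iso_inj Hpsi) => E; move: Hz; rewrite -E; lia.
- exact/(frame_iso_le Hpsi).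
- by move/(frame_iso_inj Hpsi) => E; move: Hz; rewrite E; lia.
Qed.

Lemma rk_covers a b : le a b -> rk le b = (rk le a).+1 -> covers le a b.
Proof.
move=> Hab E; split; first by split=> // Eab; move: E; rewrite Eab; lia.
by move=> [z [[Haz Hne1] [Hzb Hne2]]]; move: (rk_lt Haz Hne1) (rk_lt Hzb Hne2); lia.
Qed.

Definition dist a b := (rk le a - rk le (meet a b)) + (rk le b - rk le (meet a b)).

Lemma dist_frame F (psi : S2n n -> T) : Frame F -> frame_iso le F psi ->
  forall x y, dist (psi x) (psi y) = S2n_dist x y.
Proof.
move=> HF Hpsi x y; rewrite /dist (frame_iso_meet HF Hpsi) !(rk_frame HF Hpsi).
move: (S2n_dist_meet x y) (S2n_rank_le (S2n_meet_le_l x y)) (S2n_rank_le (S2n_meet_le_r x y)).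
lia.
Qed.

Lemma distC a b : dist a b = dist b a.
Proof. by rewrite /dist meetC; lia. Qed.

Lemma dist_xx a : dist a a = 0.
Proof. by rewrite /dist meet_l ?subnn //; apply: le_refl. Qed.

Lemma adj_dist a b : adj le a b -> dist a b = 1.
Proof.
have Hcov c d : covers le c d -> dist c d = 1.
  by move=> Hcd; have E := covers_rk Hcd; case: Hcd => [[Hle _] _]; rewrite /dist meet_l //; lia.
by case=> /Hcov //; rewrite distC.
Qed.

Lemma frame_coords_le2 a a' b b' : le a a' -> le b b' ->
  exists F (psi : S2n n -> T) x x' y y',
  [/\ Frame F, frame_iso le F psi, [/\ psi x = a, psi x' = a', psi y = b & psi y' = b'],
      S2n_le x x' & S2n_le y y'].
Proof.
move=> Ha Hb; have [F [HF HFa HFb]] := frame_of_chains (is_chain2 Ha) (is_chain2 Hb).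
have [psi Hpsi] := frame_iso_exists HF.
have [x Hx] := frame_iso_surj Hpsi (HFa a (or_introl erefl)).
have [x' Hx'] := frame_iso_surj Hpsi (HFa a' (or_intror erefl)).
have [y Hy] := frame_iso_surj Hpsi (HFb b (or_introl erefl)).
have [y' Hy'] := frame_iso_surj Hpsi (HFb b' (or_intror erefl)).
exists F, psi, x, x', y, y'.
by split=> //; apply/(frame_iso_le Hpsi); rewrite ?Hx ?Hx' ?Hy ?Hy'.
Qed.

Lemma rk_meet_join_below a b u : le a u -> le b u ->
  rk le a + rk le b <= rk le (meet a b) + rk le u /\
  (rk le a + rk le b = rk le (meet a b) + rk le u -> is_join le a b u).
Proof.
move=> Hau Hbu; have [F [psi [x [z [y [z' [HF Hpsi [<- <- <- Ez] Hxz Hyz]]]]]]] :=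
  frame_coords_le2 Hau Hbu.
move/(frame_iso_inj Hpsi): Ez => Ez; subst z'.
have Hc := S2n_le_compatible Hxz Hyz; have Hjz := S2n_join_lub Hxz Hyz.
rewrite (frame_iso_meet HF Hpsi) !(rk_frame HF Hpsi).
have := S2n_rank_modular Hc; have := S2n_rank_le Hjz; split; first lia.
move=> E; rewrite -(@S2n_rank_eq _ _ _ Hjz); first exact: (frame_iso_join HF Hpsi).
lia.
Qed.

Lemma rk_meet_submod x y z :
  rk le (meet x y) + rk le (meet y z) <= rk le y + rk le (meet x z).
Proof.
have [Hle _] := rk_meet_join_below (leIr x y) (leIl y z).
have : le (meet (meet x y) (meet y z)) (meet x z).
  by apply: meet_glb;
    [apply: le_trans (leIl _ _) (leIl _ _) | apply: le_trans (leIr _ _) (leIr _ _)].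
by move/rk_le; lia.
Qed.

Lemma dist_triangle a b c : dist a c <= dist a b + dist b c.
Proof.
rewrite /dist; move: (rk_meet_submod a b c).
move: (rk_le (leIl a b)) (rk_le (leIr a b)) (rk_le (leIl b c)) (rk_le (leIr b c)).
move: (rk_le (leIl a c)) (rk_le (leIr a c)); lia.
Qed.

Lemma walk_dist a l c : walk le a l c -> dist a c <= length l.
Proof.
elim: l a => [|y l IH] a /=; first by move=> ->; rewrite dist_xx.
by move=> [/adj_dist Hay /IH Hyc]; move: (dist_triangle a y c); lia.
Qed.

Lemma walk_cat a l1 b l2 c : walk le a l1 b -> walk le b l2 c -> walk le a (l1 ++ l2) c.
Proof.
elim: l1 a => [|y l1 IH] a /= Hab Hbc; first by rewrite Hab.
by case: Hab => Hay Hyb; split=> //; apply: IH.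
Qed.

Lemma walk_split a l c u : walk le a l c -> In u l ->
  exists l1 l2, [/\ walk le a l1 u, walk le u l2 c & length l1 + length l2 = length l].
Proof.
elim: l a => [|y l IH] a //= [Hay Hyc] [<-|Hu]; first by exists (y :: nil), l.
have [l1 [l2 [W1 W2 E]]] := IH y Hyc Hu.
by exists (y :: l1), l2; split=> //=; lia.
Qed.

Lemma walk_last a l b : walk le a l b -> l <> nil -> In b l.
Proof.
elim: l a => [|y [|z l] IH] a //= [_ Hw] _; first by left.
by right; apply: (IH y Hw).
Qed.

Lemma walk_geodesic a c : exists l, walk le a l c /\ length l = dist a c.
Proof.
have [F [psi [x [y [HF Hpsi <- <-]]]]] := frame_coords a c.
rewrite (dist_frame HF Hpsi); move Ek : (S2n_dist x y) => k.
elim: k x Ek => [|k IH] x Ek; first by exists nil; rewrite (S2n_dist0 Ek).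
have Hne : x <> y by move=> Exy; move: Ek; rewrite Exy -(dist_frame HF Hpsi) dist_xx.
have [x' [Hstep Hd]] := S2n_dist_step Hne.
have [l [W E]] := IH x' ltac:(lia).
exists (psi x' :: l); split; last by rewrite /= E.
split=> //; case: Hstep => [[Hle Hrk]|[Hle Hrk]]; [left | right];
  by apply: rk_covers; [apply/(frame_iso_le Hpsi) | rewrite !(rk_frame HF Hpsi)].
Qed.

Lemma Ipq_dist p q u : Ipq le p q u <-> dist p u + dist u q = dist p q.
Proof.
have [l0 [W0 E0]] := walk_geodesic p q.
split.
  move=> [l [[W Hmin] Hu]]; have := Hmin _ W0; have := walk_dist W.
  case: Hu => [->|Hu]; first by rewrite dist_xx.
  have [l1 [l2 [W1 W2 E]]] := walk_split W Hu.
  by move: (walk_dist W1) (walk_dist W2) (dist_triangle p u q); lia.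
move=> E; have [l1 [W1 E1]] := walk_geodesic p u; have [l2 [W2 E2]] := walk_geodesic u q.
exists (l1 ++ l2); split; first split.
- exact: walk_cat W1 W2.
- by move=> l' /walk_dist; rewrite length_app; lia.
case: l1 W1 {E1} => [|z l1] W1; first by left.
by right; apply: in_or_app; left; apply: walk_last W1 _.
Qed.

Lemma geodesic_meet_join p q u : dist p u + dist u q = dist p q ->
  rk le (meet u p) + rk le (meet u q) = rk le u + rk le (meet p q) /\
  is_join le (meet u p) (meet u q) u.
Proof.
move=> E; have E' : rk le (meet u p) + rk le (meet u q) = rk le u + rk le (meet p q).
  move: E; rewrite /dist (meetC p u).
  move: (rk_le (leIl u p)) (rk_le (leIr u p)) (rk_le (leIl u q)) (rk_le (leIr u q)).
  by move: (rk_le (leIl p q)) (rk_le (leIr p q)); lia.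
have [Hle Hjoin] := rk_meet_join_below (leIl u p) (leIl u q).
have : le (meet (meet u p) (meet u q)) (meet p q).
  by apply: meet_glb;
    [apply: le_trans (leIl _ _) (leIr _ _) | apply: le_trans (leIr _ _) (leIr _ _)].
by move/rk_le => Hm; split=> //; apply: Hjoin; lia.
Qed.

Lemma compat_part_indep F (psi : S2n n -> T) F' (psi' : S2n n -> T) x y x' y' :
  Frame F -> frame_iso le F psi -> Frame F' -> frame_iso le F' psi' ->
  psi x = psi' x' -> psi y = psi' y' ->
  psi (S2n_compat_part x y) = psi' (S2n_compat_part x' y').
Proof.
move=> HF Hpsi HF' Hpsi' Ex Ey; apply: le_anti.
  apply: (frame_compat_part_max HF' Hpsi').
    by rewrite -Ey; apply/(frame_iso_le Hpsi)/S2n_compat_part_le.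
  by rewrite -Ex; exists (psi (S2n_joinL x y)); apply: (frame_iso_joinL_part HF Hpsi).
apply: (frame_compat_part_max HF Hpsi).
  by rewrite Ey; apply/(frame_iso_le Hpsi')/S2n_compat_part_le.
by rewrite Ex; exists (psi' (S2n_joinL x' y')); apply: (frame_iso_joinL_part HF' Hpsi').
Qed.

Lemma conflicts_indep F (psi : S2n n -> T) F' (psi' : S2n n -> T) x y x' y' :
  Frame F -> frame_iso le F psi -> Frame F' -> frame_iso le F' psi' ->
  psi x = psi' x' -> psi y = psi' y' -> S2n_conflicts x y = S2n_conflicts x' y'.
Proof.
move=> HF Hpsi HF' Hpsi' Ex Ey.
have /(f_equal (rk le)) := compat_part_indep HF Hpsi HF' Hpsi' Ex Ey.
move: (f_equal (rk le) Ey); rewrite !(rk_frame HF Hpsi) !(rk_frame HF' Hpsi').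
by move: (S2n_rank_compat_part x y) (S2n_rank_compat_part x' y'); lia.
Qed.

Section GeodesicFrame.
Variables (F : T -> Prop) (psi : S2n n -> T).
Hypotheses (HF : Frame F) (Hpsi : frame_iso le F psi).

Lemma geodesic_rank_bound x y u :
  dist (psi x) u + dist u (psi y) = dist (psi x) (psi y) ->
  rk le u + S2n_conflicts x y + S2n_rank (S2n_meet x y) <= S2n_rank x + S2n_rank y.
Proof.
move=> /geodesic_meet_join [_ Hj].
have [G [psi' [a [x' [b [y' [HG Hpsi' [Ea Ex' Eb Ey'] Hax Hby]]]]]]] :=
  frame_coords_le2 (leIr u (psi x)) (leIr u (psi y)).
rewrite -Ea -Eb in Hj; have Eu := is_join_frame HG Hpsi' Hj.
have Hc := has_join_frame HG Hpsi' (ex_intro _ u Hj).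
have Ecc := conflicts_indep HF Hpsi HG Hpsi' (esym Ex') (esym Ey').
have Em : rk le (meet (psi x) (psi y)) = rk le (meet (psi' x') (psi' y')) by rewrite Ex' Ey'.
move: Em (f_equal (rk le) Ex') (f_equal (rk le) Ey').
rewrite Eu !(frame_iso_meet HF Hpsi) !(frame_iso_meet HG Hpsi').
rewrite !(rk_frame HF Hpsi) !(rk_frame HG Hpsi').
by move: (S2n_rank_join_bound Hax Hby Hc); lia.
Qed.

Lemma geodesic_joinL_unique x y u :
  dist (psi x) u + dist u (psi y) = dist (psi x) (psi y) ->
  rk le (meet u (psi x)) = S2n_rank x ->
  rk le (meet u (psi y)) + S2n_conflicts x y = S2n_rank y ->
  u = psi (S2n_joinL x y).
Proof.
move=> /geodesic_meet_join [Hr Hj] Hx Hy.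
have Ex : meet u (psi x) = psi x by apply: rk_eq; [apply: leIr | rewrite (rk_frame HF Hpsi)].
rewrite Ex in Hj Hr; set B := meet u (psi y) in Hj Hr Hy.
have HBU : le B (psi (S2n_compat_part x y)).
  by apply: (frame_compat_part_max HF Hpsi); [apply: leIr | exists u].
have [HxJ [HUJ _]] := frame_iso_joinL_part HF Hpsi x y.
have Hle : le u (psi (S2n_joinL x y)).
  by case: Hj => _ [_]; apply => //; apply: le_trans HBU HUJ.
apply: rk_eq => //; move: Hr; rewrite (frame_iso_meet HF Hpsi) !(rk_frame HF Hpsi).
by move: (S2n_rank_joinL x y); lia.
Qed.

End GeodesicFrame.

(** * The polygon Conv I(p,q) *)

Local Open Scope R_scope.

Lemma INR_addn m k : INR (m + k)%N = INR m + INR k.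
Proof. exact: plus_INR. Qed.

Lemma ConvI_halfplane p q (al be ga : R) :
  (forall u, Ipq le p q u ->
     al * fst (rvec le meet p q u) + be * snd (rvec le meet p q u) <= ga) ->
  forall z, ConvI le meet p q z -> al * fst z + be * snd z <= ga.
Proof.
move=> Hu z [l [Hl [Hs ->]]].
suff : al * fst (conv_sum le meet l p q) + be * snd (conv_sum le meet l p q) <=
       ga * fold_right Rplus 0 (map fst l) by rewrite Hs; lra.
elim: l Hl {Hs} => [|[t u] l IH] Hl; cbn [conv_sum map fold_right fst snd]; first lra.
have [Ht HIu] := Hl t u (or_introl erefl).
have := IH (fun t' u' Hi => Hl t' u' (or_intror Hi)); have := Hu u HIu.
set r := rvec le meet p q u; set s := conv_sum le meet l p q => H1 H2.
have : 0 <= t * (ga - (al * fst r + be * snd r)) by apply: Rmult_le_pos; lra.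
lra.
Qed.

Lemma ConvI_point p q u : Ipq le p q u -> ConvI le meet p q (rvec le meet p q u).
Proof.
move=> Hu; exists ((1, u) :: nil); split; first by move=> t v [[<- <-]|[]]; split=> //; lra.
split; first by rewrite /=; ring.
by cbn [conv_sum]; case: (rvec _ _ _ _ _) => r1 r2 /=; f_equal; ring.
Qed.

Lemma ConvI_segment p q u1 u2 t : 0 <= t <= 1 -> Ipq le p q u1 -> Ipq le p q u2 ->
  ConvI le meet p q
    (t * fst (rvec le meet p q u1) + (1 - t) * fst (rvec le meet p q u2),
     t * snd (rvec le meet p q u1) + (1 - t) * snd (rvec le meet p q u2)).
Proof.
move=> Ht Hu1 Hu2; exists ((t, u1) :: (1 - t, u2) :: nil).
split; first by move=> t' v [[<- <-]|[[<- <-]|[]]]; split=> //; lra.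
split; first by rewrite /=; ring.
by cbn [conv_sum fst snd]; f_equal; ring.
Qed.

Section Polygon.
Variables (F : T -> Prop) (psi : S2n n -> T) (x y : S2n n).
Hypotheses (HF : Frame F) (Hpsi : frame_iso le F psi).

Let p := psi x.
Let q := psi y.
Let a := INR (S2n_rank x) - INR (S2n_rank (S2n_meet x y)).
Let b := INR (S2n_rank y) - INR (S2n_rank (S2n_meet x y)).
Let c := INR (S2n_conflicts x y).
Let vL := (a, b - c).
Let vR := (a - c, b).

Lemma rk_meet_frame : rk le (meet p q) = S2n_rank (S2n_meet x y).
Proof. by rewrite /p /q (frame_iso_meet HF Hpsi) (rk_frame HF Hpsi). Qed.

Lemma rvec_joinL : rvec le meet p q (psi (S2n_joinL x y)) = vL.
Proof.
rewrite /rvec rk_meet_frame /p /q !(frame_iso_meet HF Hpsi).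
rewrite S2n_joinL_meet_l S2n_joinL_meet_r !(rk_frame HF Hpsi).
by rewrite /vL /a /b /c -(S2n_rank_compat_part x y) INR_addn; f_equal; ring.
Qed.

Lemma rvec_joinR : rvec le meet p q (psi (S2n_joinL y x)) = vR.
Proof.
rewrite /rvec rk_meet_frame /p /q !(frame_iso_meet HF Hpsi).
rewrite S2n_joinL_meet_l S2n_joinL_meet_r !(rk_frame HF Hpsi).
by rewrite /vR /a /b /c -(S2n_rank_compat_part y x) S2n_conflictsC INR_addn; f_equal; ring.
Qed.

Lemma Ipq_joinL : Ipq le p q (psi (S2n_joinL x y)).
Proof. by apply/Ipq_dist; rewrite !(dist_frame HF Hpsi) S2n_dist_joinL. Qed.

Lemma Ipq_joinR : Ipq le p q (psi (S2n_joinL y x)).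
Proof.
apply/Ipq_dist; rewrite !(dist_frame HF Hpsi) (S2n_distC x) (S2n_distC _ y) (S2n_distC x).
by rewrite addnC S2n_dist_joinL.
Qed.

Lemma Ipq_rvec_bound u : Ipq le p q u ->
  [/\ fst (rvec le meet p q u) <= a, snd (rvec le meet p q u) <= b &
      fst (rvec le meet p q u) + snd (rvec le meet p q u) <= a + b - c].
Proof.
move/Ipq_dist => Hu; have [Hr _] := geodesic_meet_join Hu.
move: Hr (geodesic_rank_bound HF Hpsi Hu) (rk_le (leIr u p)) (rk_le (leIr u q)).
rewrite /rvec /a /b /c rk_meet_frame /p /q !(rk_frame HF Hpsi) /=.
move=> /(f_equal INR) Hr /leP/le_INR Hbd /leP/le_INR H1 /leP/le_INR H2.
by move: Hr Hbd; rewrite !INR_addn => Hr Hbd; split; lra.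
Qed.

Lemma ConvI_polygon z : ConvI le meet p q z ->
  [/\ fst z <= a, snd z <= b & fst z + snd z <= a + b - c].
Proof.
move=> Hz; split.
- suff : 1 * fst z + 0 * snd z <= a by lra.
  by apply: ConvI_halfplane Hz => u /Ipq_rvec_bound [? ? ?]; lra.
- suff : 0 * fst z + 1 * snd z <= b by lra.
  by apply: ConvI_halfplane Hz => u /Ipq_rvec_bound [? ? ?]; lra.
- suff : 1 * fst z + 1 * snd z <= a + b - c by lra.
  by apply: ConvI_halfplane Hz => u /Ipq_rvec_bound [? ? ?]; lra.
Qed.

Lemma ConvI_vL : ConvI le meet p q vL.
Proof. by rewrite -rvec_joinL; apply: ConvI_point Ipq_joinL. Qed.

Lemma ConvI_vR : ConvI le meet p q vR.
Proof. by rewrite -rvec_joinR; apply: ConvI_point Ipq_joinR. Qed.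

Lemma ConvI_edge t : 0 <= t <= 1 ->
  ConvI le meet p q (t * a + (1 - t) * (a - c), t * (b - c) + (1 - t) * b).
Proof.
by move=> Ht; have := ConvI_segment Ht Ipq_joinL Ipq_joinR; rewrite rvec_joinL rvec_joinR.
Qed.

Lemma rvec_joinL_inj u : Ipq le p q u -> rvec le meet p q u = vL -> u = psi (S2n_joinL x y).
Proof.
move=> /Ipq_dist Hu; rewrite /rvec /vL /a /b /c rk_meet_frame /p /q => -[E1 E2].
apply: (geodesic_joinL_unique HF Hpsi Hu); apply: INR_eq; [lra | rewrite INR_addn; lra].
Qed.

Lemma rvec_joinR_inj u : Ipq le p q u -> rvec le meet p q u = vR -> u = psi (S2n_joinL y x).
Proof.
move=> /Ipq_dist Hu; rewrite /rvec /vR /a /b /c rk_meet_frame /p /q => -[E1 E2].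
rewrite (distC p u) (distC u q) (distC p q) addnC in Hu.
apply: (geodesic_joinL_unique HF Hpsi Hu); apply: INR_eq.
  by lra.
by rewrite INR_addn S2n_conflictsC; lra.
Qed.

Lemma Epq_frame u :
  Epq le meet p q u <-> u = psi (S2n_joinL x y) \/ u = psi (S2n_joinL y x).
Proof.
split.
  move=> [HI [Hext Hcw]].
  have [E|E] := polygon_vertex ConvI_polygon ConvI_vL ConvI_vR ConvI_edge Hext Hcw.
  - by left; apply: rvec_joinL_inj.
  - by right; apply: rvec_joinR_inj.
case=> ->.
- split; first exact: Ipq_joinL.
  rewrite rvec_joinL; split.
  + exact: polygon_extremeL ConvI_polygon ConvI_vL.
  + exact: polygon_cw_maximalL ConvI_polygon ConvI_vL.
- split; first exact: Ipq_joinR.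
  rewrite rvec_joinR; split.
  + exact: polygon_extremeR ConvI_polygon ConvI_vR.
  + exact: polygon_cw_maximalR ConvI_polygon ConvI_vR.
Qed.

Lemma conflicts_gt0 : ~ S2n_compatible x y -> 0 < c.
Proof. by move=> /S2n_conflicts_gt0 Hc; apply: lt_0_INR; apply/ltP. Qed.

Lemma conflicts_eq0 : S2n_compatible x y -> c = 0.
Proof. by move=> /S2n_conflicts0 Hc; rewrite /c Hc. Qed.

Lemma cone_coeff_joinL_incompat : ~ S2n_compatible x y ->
  cone_coeff (Cone le meet p q (psi (S2n_joinL x y))) = 1 / 2.
Proof.
move=> Hc; apply: cone_coeff_lower => w; rewrite /Cone rvec_joinL.
exact: (normal_coneL_lower ConvI_polygon ConvI_vR (conflicts_gt0 Hc)).
Qed.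

Lemma cone_coeff_joinR_incompat : ~ S2n_compatible x y ->
  cone_coeff (Cone le meet p q (psi (S2n_joinL y x))) = 1 / 2.
Proof.
move=> Hc; apply: cone_coeff_upper => w; rewrite /Cone rvec_joinR.
exact: (normal_coneR_upper ConvI_polygon ConvI_vL (conflicts_gt0 Hc)).
Qed.

Lemma cone_coeff_join_compat : S2n_compatible x y ->
  cone_coeff (Cone le meet p q (psi (S2n_join x y))) = 1.
Proof.
move=> Hc; apply: cone_coeff_quadrant => w.
rewrite /Cone -(S2n_joinL_compatible Hc) rvec_joinL.
exact: (normal_cone_corner ConvI_polygon (conflicts_eq0 Hc)).
Qed.

End Polygon.

(** * Submodularity *)

Lemma sumE_perm l l' : Permutation l l' -> sumE l = sumE l'.
Proof.
elim=> //= [x l1 l2 _ -> | x y l1 | l1 l2 l3 _ -> _ ->] //.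
by case: x; case: y; case: (sumE l1) => //= *; f_equal; ring.
Qed.

Definition submodular_at (f : T -> ER) p q :=
  forall l, NoDup l -> (forall u, In u l <-> Epq le meet p q u) ->
  leE (addE (f (meet p q)) (sumE (map (sm_term le meet f p q) l))) (addE (f p) (f q)).

Lemma submodular_at_enum f p q l0 :
  NoDup l0 -> (forall u, In u l0 <-> Epq le meet p q u) ->
  submodular_at f p q <->
  leE (addE (f (meet p q)) (sumE (map (sm_term le meet f p q) l0))) (addE (f p) (f q)).
Proof.
move=> Hnd0 Hl0; split=> [Hf | Hf l Hnd Hl]; first exact: Hf.
have Hperm : Permutation l l0 by apply: NoDup_Permutation => // u; rewrite Hl Hl0.
by rewrite (sumE_perm (Permutation_map _ Hperm)).
Qed.

Section PairInFrame.
Variables (F : T -> Prop) (psi : S2n n -> T) (x y : S2n n) (f : T -> ER).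
Hypotheses (HF : Frame F) (Hpsi : frame_iso le F psi).

Lemma submodular_at_compat : S2n_compatible x y ->
  submodular_at f (psi x) (psi y) <->
  leE (addE (f (psi (S2n_meet x y))) (f (psi (S2n_join x y)))) (addE (f (psi x)) (f (psi y))).
Proof.
move=> Hc; rewrite (@submodular_at_enum _ _ _ (psi (S2n_join x y) :: nil)).
- rewrite /= /sm_term (cone_coeff_join_compat HF Hpsi Hc) (frame_iso_meet HF Hpsi).
  destruct (Req_EM_T 1 0); first lra.
  by case: (f _) => [v|]; case: (f _) => [w|] //=; rewrite Rmult_1_l Rplus_0_r.
- by constructor; [case | constructor].
- move=> u; rewrite (Epq_frame x y HF Hpsi) (S2n_joinL_compatible Hc).
  rewrite (S2n_joinL_compatible (S2n_compatibleC Hc)) S2n_joinC.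
  by split=> /= [[<-|[]]|[->|->]]; auto.
Qed.

Lemma submodular_at_incompat : ~ S2n_compatible x y ->
  submodular_at f (psi x) (psi y) <->
  leE (addE (f (psi (S2n_meet x y)))
        (addE (scaleE (1 / 2) (f (psi (S2n_joinL x y))))
              (addE (scaleE (1 / 2) (f (psi (S2n_joinL y x)))) (Some 0))))
      (addE (f (psi x)) (f (psi y))).
Proof.
move=> Hc; rewrite (@submodular_at_enum _ _ _ (psi (S2n_joinL x y) :: psi (S2n_joinL y x) :: nil)).
- rewrite /= /sm_term (cone_coeff_joinL_incompat HF Hpsi Hc).
  rewrite (cone_coeff_joinR_incompat HF Hpsi Hc) (frame_iso_meet HF Hpsi).
  by destruct (Req_EM_T (1 / 2) 0); first lra.
- have Hne : psi (S2n_joinL x y) <> psi (S2n_joinL y x).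
    by move/(frame_iso_inj Hpsi); apply: S2n_joinLR_neq.
  constructor; first by case=> // E; apply: Hne; rewrite E.
  by constructor; [case | constructor].
- by move=> u; rewrite (Epq_frame x y HF Hpsi); split=> /= [[<-|[<-|[]]]|[->|->]]; auto.
Qed.

End PairInFrame.

Ltac case_ER f :=
  repeat match goal with H : context [f ?a] |- _ => revert H end;
  repeat match goal with |- context [f ?a] => destruct (f a) end;
  cbn; intros; try tauto; lra.

Lemma submodular_iff_pjoin_submodular f :
  submodular le meet f <-> pjoin_submodular le meet f.
Proof.
split=> Hf p q; have [F [psi [x [y [HF Hpsi <- <-]]]]] := frame_coords p q;
  have [Hc|Hc] := classic (S2n_compatible x y).
- rewrite (frame_iso_meet HF Hpsi) (pjoin_frame HF Hpsi).
  exact/(submodular_at_compat f HF Hpsi Hc)/Hf.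
- rewrite (frame_iso_meet HF Hpsi) (pjoin_frame HF Hpsi).
  have H1 := proj1 (submodular_at_incompat f HF Hpsi Hc) (Hf _ _).
  have Hc' : ~ S2n_compatible (S2n_joinL x y) (S2n_joinL y x).
    by move/S2n_compatible_joinLR.
  have H2 := proj1 (submodular_at_incompat f HF Hpsi Hc') (Hf _ _).
  rewrite S2n_meet_joinLR !S2n_joinL_joinLR in H2.
  case_ER f.
- apply/(submodular_at_compat f HF Hpsi Hc).
  by move: (Hf (psi x) (psi y)); rewrite (frame_iso_meet HF Hpsi) (pjoin_frame HF Hpsi).
- apply/(submodular_at_incompat f HF Hpsi Hc).
  move: (Hf (psi x) (psi y)) (Hf (psi x) (psi (S2n_join x y)))
    (Hf (psi (S2n_meet x (S2n_join x y))) (psi y)).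
  rewrite !(frame_iso_meet HF Hpsi) !(pjoin_frame HF Hpsi).
  rewrite S2n_join_join S2n_join_meet_join S2n_meet_meet_join.
  case_ER f.
Qed.

End PolarSpace.

Theorem theorem3p7 (T : Type) (le : T -> T -> Prop) (meet : T -> T -> T)
  (n : nat) (Frame : (T -> Prop) -> Prop)
  (HL : is_polar_space le meet n Frame) (f : T -> ER) :
  (submodular le meet f <-> pjoin_submodular le meet f) /\
  (pjoin_submodular le meet f <-> frame_bisubmodular le n Frame f).
Proof.
split; [exact: submodular_iff_pjoin_submodular HL f |
        exact: pjoin_submodular_iff_frame_bisubmodular HL f].
Qed.
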